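(* Let $h:[0,r_0]\to[0,\infty)$ be a continuous increasing function with $h(0)=0$ such that $\sum_{n=N}^\infty n\,h\!\left(n^{-n^2}\right)<+\infty$ (for some $N$ with $N^{-N^2}\leq r_0$). Then $\mathcal{H}^h(\mathcal{S})=0$. Moreover, $\mathcal{S}$ contains a dense $G_\delta$ subset of $(0,1)$; in particular $\mathcal{S}$ is uncountable.
   Context: For $\alpha\in(0,1)\setminus\mathbb{Q}$ let $p_s/q_s$ be its continued fraction convergents ($\alpha=[0;a_1,a_2,\dots]$, $q_s=a_sq_{s-1}+q_{s-2}$, $q_0=1$, $q_{-1}=0$). Define $\mathcal{S}=\left\{\alpha\in(0,1)\setminus\mathbb{Q}:\ \limsup_{s\to\infty}\frac{\log q_{s+1}}{q_s^2\log q_s}=+\infty\right\}$. For $E\subset\mathbb{C}$ and $\delta>0$, $\mathcal{H}^h_\delta(E)=\inf\sum_n h(\operatorname{diam}A_n/2)$, the infimum over all countable coverings of $E$ by bounded sets $A_n$ of diameter less than $\delta$; the Hausdorff $h$-measure is $\mathcal{H}^h(E)=\lim_{\delta\to0}\mathcal{H}^h_\delta(E)$. *)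

From Stdlib Require Import Reals.
Open Scope R_scope.

(* Gauss-map remainders: x_0 = alpha, x_{s+1} = 1/x_s - floor(1/x_s).
   Int_part r = up r - 1 is the floor of r. *)
Fixpoint cf_rem (alpha : R) (s : nat) : R :=
  match s with
  | O => alpha
  | S s' => let x := cf_rem alpha s' in / x - IZR (Int_part (/ x))
  end.

Definition cf_a_succ (alpha : R) (s : nat) : Z := Int_part (/ cf_rem alpha s).

(* cf_qq alpha s = (q_{s-1}, q_s), with q_{-1} = 0, q_0 = 1,
   q_{s+1} = a_{s+1} q_s + q_{s-1}. *)
Fixpoint cf_qq (alpha : R) (s : nat) : R * R :=
  match s with
  | O => (0, 1)
  | S s' => let (qm, q) := cf_qq alpha s' in
            (q, IZR (cf_a_succ alpha s') * q + qm)
  end.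

Definition cf_q (alpha : R) (s : nat) : R := snd (cf_qq alpha s).

Definition irrational (x : R) : Prop :=
  ~ exists (p q : Z), q <> 0%Z /\ x = IZR p / IZR q.

Definition S_set (alpha : R) : Prop :=
  0 < alpha < 1 /\ irrational alpha /\
  forall (M : R) (s0 : nat), exists s : nat, (s0 <= s)%nat /\
     ln (cf_q alpha (S s)) / ((cf_q alpha s) ^ 2 * ln (cf_q alpha s)) > M.

Definition C := (R * R)%type.

Definition cdist (z w : C) : R :=
  sqrt ((fst z - fst w) ^ 2 + (snd z - snd w) ^ 2).

(* d is the diameter of A: least nonnegative bound of pairwise distances
   (so A is bounded; the empty set has diameter 0). *)
Definition is_diam (A : C -> Prop) (d : R) : Prop :=
  0 <= d /\
  (forall z w, A z -> A w -> cdist z w <= d) /\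
  (forall d', 0 <= d' -> (forall z w, A z -> A w -> cdist z w <= d') -> d <= d').

(* H^h_delta(E) <= c : for every eta > 0 there is a countable covering of E
   by bounded sets A_n of diameter d_n < delta with sum h(d_n/2) <= c + eta. *)
Definition Hdelta_le (h : R -> R) (delta : R) (E : C -> Prop) (c : R) : Prop :=
  forall eta, 0 < eta ->
  exists (A : nat -> C -> Prop) (d : nat -> R) (l : R),
    (forall n, is_diam (A n) (d n) /\ d n < delta) /\
    (forall z, E z -> exists n, A n z) /\
    infinite_sum (fun n => h (d n / 2)) l /\
    l <= c + eta.

Definition Hausdorff_zero (h : R -> R) (E : C -> Prop) : Prop :=
  forall eps, 0 < eps -> exists delta0, 0 < delta0 /\
    forall delta, 0 < delta < delta0 -> Hdelta_le h delta E eps.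

Definition embedC (X : R -> Prop) : C -> Prop :=
  fun z => exists x, X x /\ z = (x, 0).

Definition is_G_delta (G : R -> Prop) : Prop :=
  exists U : nat -> R -> Prop,
    (forall n, open_set (U n)) /\ (forall x, G x <-> forall n, U n x).

Definition dense_in_01 (G : R -> Prop) : Prop :=
  forall a b, 0 <= a -> a < b -> b <= 1 -> exists x, a < x < b /\ G x.

Definition countable_set (X : R -> Prop) : Prop :=
  exists f : nat -> R, forall x, X x -> exists n, f n = x.

From Stdlib Require Import Reals Lra Lia Psatz ZArith List.
Open Scope R_scope.

(* Every x in S has, for infinitely many s, a convergent p/q with q_(s+1) > q^(q^2), hence
   |x - p/q| < q^(-q^2).  For every Q, S is thus covered by the intervals of radius n^(-n^2)
   around the fractions p/n with n >= Q and 0 <= p <= n, of total h-cost at most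
   sum_(n >= Q) (n + 1) h(n^(-n^2)), a tail of the convergent series.

   The G_delta set is the intersection over n of the unions of the open cylinders whose last
   partial quotient is so large that log q_(s+1) > n q_s^2 log q_s with s >= n.  Any cylinder
   contains such subcylinders, so nested cylinders give density; choosing at step j one of two
   disjoint subcylinders, the one avoiding the j-th term of a given sequence, gives
   uncountability. *)

(* [cf_val [a_k; ...; a_1] y] is the continued fraction [0; a_1, ..., a_(k-1), a_k + y]:
   words list their digits from the last one, so that appending a digit is [cons].
   Its convergent is [num w / den w] = p_k / q_k, and [den_prev w] = q_(k-1). *)
Fixpoint cf_val (w : list nat) (y : R) : R :=
  match w with nil => y | a :: w' => cf_val w' (/ (INR a + y)) end.

Fixpoint den (w : list nat) : nat :=
  match w with
  | nil => 1
  | a :: w' => a * den w' + match w' with nil => 0 | _ :: w'' => den w'' end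
  end.

Definition den_prev (w : list nat) : nat :=
  match w with nil => 0 | _ :: w' => den w' end.

Fixpoint num (w : list nat) : nat :=
  match w with
  | nil => 0
  | a :: w' => a * num w' + match w' with nil => 1 | _ :: w'' => num w'' end
  end.

Definition num_prev (w : list nat) : nat :=
  match w with nil => 1 | _ :: w' => num w' end.

Lemma den_cons a w : den (a :: w) = (a * den w + den_prev w)%nat.
Proof. destruct w; reflexivity. Qed.

Lemma num_cons a w : num (a :: w) = (a * num w + num_prev w)%nat.
Proof. destruct w; reflexivity. Qed.

Lemma den_pos w : Forall (le 1) w -> (1 <= den w)%nat.
Proof.
  induction 1 as [|a w Ha Hw IH]; [reflexivity|].
  rewrite den_cons. nia.
Qed.

Lemma length_le_den w : Forall (le 1) w -> (length w <= den w)%nat.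
Proof.
  induction 1 as [|a w Ha Hw IH]; [simpl; lia|].
  rewrite den_cons. simpl length.
  destruct Hw as [|b w' Hb Hw']; [simpl; lia|].
  pose proof (den_pos w' Hw'). simpl den_prev. nia.
Qed.

Lemma INR_den_ge1 w : Forall (le 1) w -> 1 <= INR (den w).
Proof. intros Hw. apply (le_INR 1), den_pos, Hw. Qed.

Lemma cf_det w :
  INR (num_prev w) * INR (den w) - INR (num w) * INR (den_prev w) = (-1) ^ length w.
Proof.
  induction w as [|a w IH]; [simpl; ring|].
  rewrite num_cons, den_cons. simpl length. simpl num_prev. simpl den_prev.
  rewrite !plus_INR, !mult_INR. simpl pow. rewrite <- IH. ring.
Qed.

Lemma Rinv_digit_lt1 a y : (1 <= a)%nat -> 0 < y -> 0 < / (INR a + y) < 1.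
Proof.
  intros Ha Hy. assert (1 <= INR a) by (apply (le_INR 1); lia).
  split; [apply Rinv_0_lt_compat; lra|].
  rewrite <- Rinv_1. apply Rinv_lt_contravar; lra.
Qed.

Lemma cf_val_mobius w y : Forall (le 1) w -> 0 <= y ->
  cf_val w y = (INR (num w) + INR (num_prev w) * y) / (INR (den w) + INR (den_prev w) * y).
Proof.
  intros Hw. revert y. induction Hw as [|a w Ha Hw IH]; intros y Hy; [simpl; field|].
  simpl cf_val. assert (Ha' : 1 <= INR a) by (apply (le_INR 1); lia).
  rewrite IH by (left; apply Rinv_0_lt_compat; lra).
  rewrite num_cons, den_cons. simpl num_prev. simpl den_prev.
  pose proof (INR_den_ge1 w Hw). pose proof (pos_INR (den_prev w)).
  assert (0 <= INR (den_prev w) * y) by (apply Rmult_le_pos; lra).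
  rewrite !plus_INR, !mult_INR. field. nra.
Qed.

Lemma cf_den_ge w y : Forall (le 1) w -> 0 <= y ->
  INR (den w) <= INR (den w) + INR (den_prev w) * y.
Proof.
  intros Hw Hy. pose proof (pos_INR (den_prev w)).
  assert (0 <= INR (den_prev w) * y) by (apply Rmult_le_pos; lra). lra.
Qed.

Lemma cf_val_sub w y y' : Forall (le 1) w -> 0 <= y -> 0 <= y' ->
  cf_val w y - cf_val w y' = (-1) ^ length w * (y - y') /
    ((INR (den w) + INR (den_prev w) * y) * (INR (den w) + INR (den_prev w) * y')).
Proof.
  intros Hw Hy Hy'. rewrite !cf_val_mobius by assumption. rewrite <- cf_det.
  pose proof (cf_den_ge w y Hw Hy). pose proof (cf_den_ge w y' Hw Hy').
  pose proof (INR_den_ge1 w Hw). field. lra.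
Qed.

Lemma Rabs_cf_val_sub w y y' : Forall (le 1) w -> 0 <= y -> 0 <= y' ->
  Rabs (cf_val w y - cf_val w y') = Rabs (y - y') /
    ((INR (den w) + INR (den_prev w) * y) * (INR (den w) + INR (den_prev w) * y')).
Proof.
  intros Hw Hy Hy'. rewrite cf_val_sub by assumption.
  pose proof (cf_den_ge w y Hw Hy). pose proof (cf_den_ge w y' Hw Hy').
  pose proof (INR_den_ge1 w Hw).
  unfold Rdiv. rewrite !Rabs_mult, pow_1_abs, Rmult_1_l, Rabs_inv, Rabs_mult.
  rewrite (Rabs_right (INR (den w) + _ * y)), (Rabs_right (INR (den w) + _ * y')) by lra.
  reflexivity.
Qed.

Lemma cf_val_lipschitz w y y' : Forall (le 1) w -> 0 <= y -> 0 <= y' ->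
  Rabs (cf_val w y - cf_val w y') <= Rabs (y - y') / INR (den w).
Proof.
  intros Hw Hy Hy'. rewrite Rabs_cf_val_sub by assumption.
  pose proof (cf_den_ge w y Hw Hy). pose proof (cf_den_ge w y' Hw Hy').
  pose proof (INR_den_ge1 w Hw).
  apply Rmult_le_compat_l; [apply Rabs_pos|]. apply Rinv_le_contravar; nra.
Qed.

Lemma cf_val_strict_mono w : Forall (le 1) w ->
  (forall y y', 0 <= y -> y < y' -> cf_val w y < cf_val w y') \/
  (forall y y', 0 <= y -> y < y' -> cf_val w y' < cf_val w y).
Proof.
  intros Hw.
  assert (Hq : forall y y', 0 <= y -> y < y' -> 0 < (y' - y) /
    ((INR (den w) + INR (den_prev w) * y) * (INR (den w) + INR (den_prev w) * y'))).
  { intros y y' Hy Hyy. pose proof (INR_den_ge1 w Hw).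
    pose proof (cf_den_ge w y Hw Hy). pose proof (cf_den_ge w y' Hw ltac:(lra)).
    apply Rdiv_lt_0_compat; [lra|]. apply Rmult_lt_0_compat; lra. }
  assert (Hsub : forall y y', 0 <= y -> y < y' ->
    cf_val w y - cf_val w y' = - (-1) ^ length w * ((y' - y) /
    ((INR (den w) + INR (den_prev w) * y) * (INR (den w) + INR (den_prev w) * y')))).
  { intros y y' Hy Hyy. rewrite cf_val_sub by (assumption || lra). unfold Rdiv. ring. }
  destruct (Nat.Even_or_Odd (length w)) as [[k Hk]|[k Hk]]; [left|right]; intros y y' Hy Hyy;
    pose proof (Hsub y y' Hy Hyy) as E; pose proof (Hq y y' Hy Hyy);
    rewrite Hk in E; [rewrite pow_1_even in E | rewrite pow_add, pow_1_even in E]; lra.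
Qed.

Lemma cf_val_in_01 w y : Forall (le 1) w -> 0 < y < 1 -> 0 < cf_val w y < 1.
Proof.
  intros Hw. revert y. induction Hw as [|a w Ha Hw IH]; intros y Hy; [exact Hy|].
  apply IH, Rinv_digit_lt1; [exact Ha|lra].
Qed.

Lemma cf_val_in_closed01 w y : Forall (le 1) w -> 0 <= y <= 1 -> 0 <= cf_val w y <= 1.
Proof.
  intros Hw. revert y. induction Hw as [|a w Ha Hw IH]; intros y Hy; [exact Hy|].
  apply IH. assert (1 <= INR a) by (apply (le_INR 1); lia). split.
  - left. apply Rinv_0_lt_compat. lra.
  - rewrite <- Rinv_1. apply Rinv_le_contravar; lra.
Qed.

Lemma cf_val_onto w u v x : Forall (le 1) w -> 0 <= u -> u < v -> v <= 1 ->
  Rmin (cf_val w u) (cf_val w v) < x < Rmax (cf_val w u) (cf_val w v) ->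
  exists y, u < y < v /\ x = cf_val w y.
Proof.
  intros Hw. revert u v. induction Hw as [|a w Ha Hw IH]; intros u v Hu Huv Hv Hx.
  - simpl in Hx. rewrite Rmin_left, Rmax_right in Hx by lra.
    exists x. split; [exact Hx|reflexivity].
  - simpl cf_val in Hx. assert (Ha' : 1 <= INR a) by (apply (le_INR 1); lia).
    assert (H1 : 0 < / (INR a + v)) by (apply Rinv_0_lt_compat; lra).
    assert (H2 : / (INR a + v) < / (INR a + u)) by (apply Rinv_lt_contravar; nra).
    assert (H3 : / (INR a + u) <= 1) by (rewrite <- Rinv_1; apply Rinv_le_contravar; lra).
    rewrite Rmin_comm, Rmax_comm in Hx.
    destruct (IH (/ (INR a + v)) (/ (INR a + u)) ltac:(lra) H2 H3 Hx) as [y [Hy ->]].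
    exists (/ y - INR a). simpl cf_val.
    replace (INR a + (/ y - INR a)) with (/ y) by ring. rewrite Rinv_inv.
    split; [|reflexivity].
    assert (/ / (INR a + u) < / y) by (apply Rinv_lt_contravar; nra).
    assert (/ y < / / (INR a + v)) by (apply Rinv_lt_contravar; nra).
    rewrite Rinv_inv in *. lra.
Qed.

Lemma Int_part_IZR_add k y : 0 <= y < 1 -> Int_part (IZR k + y) = k.
Proof.
  intros Hy. unfold Int_part.
  rewrite <- (tech_up (IZR k + y) (k + 1)); [ring| |]; rewrite plus_IZR; lra.
Qed.

Lemma cf_expansion_cf_val w y : Forall (le 1) w -> 0 < y < 1 ->
  cf_rem (cf_val w y) (length w) = y /\
  cf_qq (cf_val w y) (length w) = (INR (den_prev w), INR (den w)).
Proof.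
  intros Hw. revert y. induction Hw as [|a w Ha Hw IH]; intros y Hy; [split; reflexivity|].
  destruct (IH (/ (INR a + y)) (Rinv_digit_lt1 a y Ha ltac:(lra))) as [Hrem Hqq].
  assert (Hdigit : Int_part (/ / (INR a + y)) = Z.of_nat a).
  { rewrite Rinv_inv, INR_IZR_INZ. apply Int_part_IZR_add. lra. }
  simpl length. simpl cf_val. split.
  - simpl. rewrite Hrem, Hdigit, Rinv_inv, <- INR_IZR_INZ. ring.
  - rewrite den_cons. simpl. rewrite Hqq. unfold cf_a_succ.
    rewrite Hrem, Hdigit, <- INR_IZR_INZ, plus_INR, mult_INR. reflexivity.
Qed.

Fixpoint cf_digits (c : R) (k : nat) : list nat :=
  match k with O => nil | S k' => Z.to_nat (cf_a_succ c k') :: cf_digits c k' end.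

Lemma cf_rem_range c k : 0 < c < 1 -> 0 <= cf_rem c k < 1.
Proof.
  intros Hc. destruct k as [|k]; [simpl; lra|].
  simpl. destruct (base_Int_part (/ cf_rem c k)). lra.
Qed.

Lemma Int_part_inv_ge1 x : 0 < x < 1 -> (1 <= Int_part (/ x))%Z.
Proof.
  intros Hx. destruct (base_Int_part (/ x)).
  assert (1 < / x) by (rewrite <- Rinv_1; apply Rinv_lt_contravar; lra).
  assert (0 < Int_part (/ x))%Z by (apply lt_IZR; lra). lia.
Qed.

Lemma cf_digits_spec c k : 0 < c < 1 -> (forall j, (j < k)%nat -> cf_rem c j <> 0) ->
  Forall (le 1) (cf_digits c k) /\ length (cf_digits c k) = k /\
  c = cf_val (cf_digits c k) (cf_rem c k).
Proof.
  intros Hc. induction k as [|k IH]; intros Hnz; [repeat split; constructor|].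
  destruct IH as [Hw [Hlen Hval]]; [intros j Hj; apply Hnz; lia|].
  assert (Hx : 0 < cf_rem c k < 1).
  { pose proof (cf_rem_range c k Hc). pose proof (Hnz k (Nat.lt_succ_diag_r k)). lra. }
  pose proof (Int_part_inv_ge1 _ Hx) as Hd.
  assert (Ha : INR (Z.to_nat (cf_a_succ c k)) = IZR (Int_part (/ cf_rem c k))).
  { unfold cf_a_succ. rewrite INR_IZR_INZ, Z2Nat.id by lia. reflexivity. }
  repeat split.
  - constructor; [unfold cf_a_succ; lia|exact Hw].
  - simpl. rewrite Hlen. reflexivity.
  - simpl cf_val. simpl cf_rem. rewrite Ha.
    replace (IZR (Int_part (/ cf_rem c k)) + (/ cf_rem c k - IZR (Int_part (/ cf_rem c k))))
      with (/ cf_rem c k) by ring.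
    rewrite Rinv_inv. exact Hval.
Qed.

Lemma cf_val_0 w : Forall (le 1) w -> cf_val w 0 = INR (num w) / INR (den w).
Proof. intros Hw. rewrite cf_val_mobius by (assumption || lra). f_equal; ring. Qed.

Lemma num_le_den w : Forall (le 1) w -> (num w <= den w)%nat.
Proof.
  intros Hw. pose proof (cf_val_in_closed01 w 0 Hw ltac:(lra)) as [_ H1].
  rewrite cf_val_0 in H1 by exact Hw. pose proof (INR_den_ge1 w Hw).
  apply INR_le. apply (Rmult_le_compat_r (INR (den w))) in H1; [|lra].
  unfold Rdiv in H1. rewrite Rmult_assoc, Rinv_l, Rmult_1_r, Rmult_1_l in H1 by lra. exact H1.
Qed.

Lemma cf_rem_neq0 c : 0 < c < 1 -> irrational c -> forall k, cf_rem c k <> 0.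
Proof.
  intros Hc Hirr.
  enough (H : forall k j, (j < k)%nat -> cf_rem c j <> 0) by (intros k; apply (H (S k)); lia).
  induction k as [|k IH]; intros j Hj; [lia|].
  destruct (Nat.eq_dec j k) as [->|]; [|apply IH; lia].
  intros E. destruct (cf_digits_spec c k Hc IH) as [Hw [_ Hval]].
  rewrite E, cf_val_0 in Hval by exact Hw. apply Hirr.
  exists (Z.of_nat (num (cf_digits c k))), (Z.of_nat (den (cf_digits c k))).
  pose proof (den_pos _ Hw). split; [lia|]. rewrite <- !INR_IZR_INZ. exact Hval.
Qed.

Lemma Rabs_sub_rationals (P Q : Z) (p q : nat) : Q <> 0%Z -> (0 < q)%nat ->
  IZR P / IZR Q <> INR p / INR q ->
  / (Rabs (IZR Q) * INR q) <= Rabs (IZR P / IZR Q - INR p / INR q).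
Proof.
  intros HQ Hq Hne.
  assert (HQ' : IZR Q <> 0) by (apply not_0_IZR; exact HQ).
  assert (HQpos : 0 < Rabs (IZR Q)) by (apply Rabs_pos_lt; exact HQ').
  assert (Hq' : 0 < INR q) by (apply (lt_INR 0); exact Hq).
  set (z := (P * Z.of_nat q - Q * Z.of_nat p)%Z).
  assert (Ez : IZR P / IZR Q - INR p / INR q = IZR z / (IZR Q * INR q)).
  { unfold z. rewrite minus_IZR, !mult_IZR, <- !INR_IZR_INZ. field. lra. }
  assert (Hz : z <> 0%Z).
  { intros Hz. apply Hne. apply Rminus_diag_uniq. rewrite Ez, Hz. unfold Rdiv. ring. }
  assert (Hz1 : 1 <= Rabs (IZR z)) by (rewrite <- abs_IZR; apply IZR_le; lia).
  rewrite Ez. unfold Rdiv. rewrite Rabs_mult, Rabs_inv, Rabs_mult, (Rabs_right (INR q)) by lra.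
  rewrite <- (Rmult_1_l (/ (Rabs (IZR Q) * INR q))) at 1.
  apply Rmult_le_compat_r; [left; apply Rinv_0_lt_compat; nra|exact Hz1].
Qed.

Lemma cf_val_near_convergent w y : Forall (le 1) w -> 0 < y < 1 ->
  0 < Rabs (cf_val w y - INR (num w) / INR (den w)) < / (INR (den w) * INR (den w)).
Proof.
  intros Hw Hy. rewrite <- cf_val_0 by exact Hw.
  rewrite Rabs_cf_val_sub, Rmult_0_r, Rplus_0_r, Rminus_0_r, Rabs_right by (assumption || lra).
  pose proof (INR_den_ge1 w Hw). pose proof (cf_den_ge w y Hw ltac:(lra)).
  split.
  - apply Rdiv_lt_0_compat; nra.
  - apply Rle_lt_trans with (y * / (INR (den w) * INR (den w))).
    + apply Rmult_le_compat_l; [lra|]. apply Rinv_le_contravar; nra.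
    + rewrite <- (Rmult_1_l (/ (INR (den w) * _))) at 2.
      apply Rmult_lt_compat_r; [apply Rinv_0_lt_compat; nra|lra].
Qed.

Lemma rational_in_cylinder w y (P Q : Z) : Forall (le 1) w -> 0 < y < 1 -> Q <> 0%Z ->
  cf_val w y = IZR P / IZR Q -> INR (den w) < Rabs (IZR Q).
Proof.
  intros Hw Hy HQ E.
  destruct (cf_val_near_convergent w y Hw Hy) as [Hne Hlt]. rewrite E in Hne, Hlt.
  assert (HQpos : 0 < Rabs (IZR Q)) by (apply Rabs_pos_lt, not_0_IZR, HQ).
  pose proof (INR_den_ge1 w Hw).
  pose proof (Rabs_sub_rationals P Q (num w) (den w) HQ (den_pos w Hw)) as Hge.
  destruct (Rlt_or_le (INR (den w)) (Rabs (IZR Q))) as [|Hle]; [assumption|exfalso].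
  assert (/ (INR (den w) * INR (den w)) <= / (Rabs (IZR Q) * INR (den w)))
    by (apply Rinv_le_contravar; nra).
  enough (Hne' : IZR P / IZR Q <> INR (num w) / INR (den w)) by (specialize (Hge Hne'); lra).
  intros Heq. rewrite Heq, Rminus_diag, Rabs_R0 in Hne. lra.
Qed.

Lemma cf_qq_digits c s : 0 < c < 1 -> irrational c ->
  cf_qq c s = (INR (den_prev (cf_digits c s)), INR (den (cf_digits c s))).
Proof.
  intros Hc Hirr.
  destruct (cf_digits_spec c s Hc (fun j _ => cf_rem_neq0 c Hc Hirr j)) as [Hw [Hlen Hval]].
  pose proof (cf_rem_range c s Hc). pose proof (cf_rem_neq0 c Hc Hirr s).
  destruct (cf_expansion_cf_val _ (cf_rem c s) Hw ltac:(lra)) as [_ E].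
  rewrite <- Hval, Hlen in E. exact E.
Qed.

Lemma cf_q_digits c s : 0 < c < 1 -> irrational c -> cf_q c s = INR (den (cf_digits c s)).
Proof. intros Hc Hirr. unfold cf_q. rewrite cf_qq_digits by assumption. reflexivity. Qed.

Lemma cf_convergent_error c s : 0 < c < 1 -> irrational c ->
  Rabs (c - INR (num (cf_digits c s)) / INR (den (cf_digits c s)))
    <= / (cf_q c s * cf_q c (S s)).
Proof.
  intros Hc Hirr.
  destruct (cf_digits_spec c s Hc (fun j _ => cf_rem_neq0 c Hc Hirr j)) as [Hw [_ Hval]].
  set (w := cf_digits c s) in *. set (x := cf_rem c s) in *.
  assert (Hx : 0 < x < 1)
    by (pose proof (cf_rem_range c s Hc); pose proof (cf_rem_neq0 c Hc Hirr s); unfold x; lra).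
  set (a := Int_part (/ x)).
  assert (Hax : x * IZR a <= 1).
  { destruct (base_Int_part (/ x)) as [Ha _]. fold a in Ha.
    apply (Rmult_le_compat_l x) in Ha; [|lra]. rewrite Rinv_r in Ha; lra. }
  pose proof (cf_q_digits c s Hc Hirr) as Hqs. fold w in Hqs.
  assert (Hqs1 : cf_q c (S s) = IZR a * INR (den w) + INR (den_prev w)).
  { unfold cf_q. simpl cf_qq. rewrite cf_qq_digits by assumption. reflexivity. }
  rewrite Hqs, Hqs1, Hval at 1. rewrite <- cf_val_0 by exact Hw.
  rewrite Rabs_cf_val_sub, Rmult_0_r, Rplus_0_r, Rminus_0_r, Rabs_right by (assumption || lra).
  pose proof (INR_den_ge1 w Hw). pose proof (pos_INR (den_prev w)).
  assert (1 <= IZR a) by (apply (IZR_le 1); apply Int_part_inv_ge1; exact Hx).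
  (* x q_(s+1) <= q_s + q_(s-1) x, as a_(s+1) = floor (1/x) <= 1/x *)
  assert (HD : x * (IZR a * INR (den w) + INR (den_prev w))
    <= INR (den w) + INR (den_prev w) * x) by nra.
  apply Rle_trans with (x / (x * (IZR a * INR (den w) + INR (den_prev w)) * INR (den w))).
  - apply Rmult_le_compat_l; [lra|]. apply Rinv_le_contravar; [|nra].
    apply Rmult_lt_0_compat; [|lra]. apply Rmult_lt_0_compat; nra.
  - right. field. split; nra.
Qed.

Definition approx_radius (n : nat) : R := / (INR n ^ (n * n)).

Lemma approx_radius_pos n : (1 <= n)%nat -> 0 < approx_radius n.
Proof. intros Hn. apply Rinv_0_lt_compat, pow_lt, (lt_INR 0). lia. Qed.

Lemma approx_radius_antitone m n : (1 <= m)%nat -> (m <= n)%nat ->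
  approx_radius n <= approx_radius m.
Proof.
  intros Hm Hmn. unfold approx_radius.
  apply Rinv_le_contravar; [apply pow_lt, (lt_INR 0); lia|].
  apply Rle_trans with (INR n ^ (m * m)).
  - apply pow_incr. split; [apply pos_INR|apply le_INR, Hmn].
  - apply Rle_pow; [apply (le_INR 1); lia|nia].
Qed.

Lemma approx_radius_le_inv n : (1 <= n)%nat -> approx_radius n <= / INR n.
Proof.
  intros Hn. unfold approx_radius. apply Rinv_le_contravar; [apply (lt_INR 0); lia|].
  rewrite <- (pow_1 (INR n)) at 1. apply Rle_pow; [apply (le_INR 1); lia|nia].
Qed.

Lemma pow_lt_of_ln_ratio (n : nat) (y : R) : (2 <= n)%nat -> 0 < y ->
  ln y / (INR n ^ 2 * ln (INR n)) > 1 -> INR n ^ (n * n) < y.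
Proof.
  intros Hn Hy Hr. assert (Hn' : 2 <= INR n) by (apply (le_INR 2); exact Hn).
  assert (Hln : 0 < ln (INR n)) by (rewrite <- ln_1; apply ln_increasing; lra).
  assert (Hd : 0 < INR n ^ 2 * ln (INR n)) by (apply Rmult_lt_0_compat; nra).
  apply ln_lt_inv; [apply pow_lt; lra|exact Hy|].
  rewrite ln_pow, mult_INR by lra.
  apply (Rmult_gt_compat_r (INR n ^ 2 * ln (INR n))) in Hr; [|exact Hd].
  unfold Rdiv in Hr. rewrite Rmult_assoc, Rinv_l, Rmult_1_r in Hr by lra. nra.
Qed.

(* The limsup condition provides convergents p/q with q_(s+1) > q^(q^2), whence
   |c - p/q| <= 1/(q q_(s+1)) < q^(-q^2). *)
Lemma S_set_approx c Q : S_set c -> (2 <= Q)%nat ->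
  exists n p, (Q <= n)%nat /\ (p <= n)%nat /\ Rabs (c - INR p / INR n) <= approx_radius n.
Proof.
  intros [Hc [Hirr Hlimsup]] HQ. destruct (Hlimsup 1 Q) as [s [Hs Hr]].
  destruct (cf_digits_spec c s Hc (fun j _ => cf_rem_neq0 c Hc Hirr j)) as [Hw [Hlen _]].
  set (w := cf_digits c s) in *.
  exists (den w), (num w).
  assert (Hn : (Q <= den w)%nat) by (pose proof (length_le_den w Hw); lia).
  pose proof (cf_q_digits c s Hc Hirr) as Hq.
  assert (Hq1 : 1 <= cf_q c (S s)).
  { rewrite (cf_q_digits c (S s) Hc Hirr). apply INR_den_ge1, (cf_digits_spec c (S s) Hc).
    intros j _. apply cf_rem_neq0; assumption. }
  rewrite Hq in Hr. fold w in Hr.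
  pose proof (pow_lt_of_ln_ratio (den w) (cf_q c (S s)) ltac:(lia) ltac:(lra) Hr) as Hbig.
  split; [exact Hn|split].
  - apply num_le_den, Hw.
  - eapply Rle_trans; [apply cf_convergent_error; assumption|].
    rewrite Hq. fold w. pose proof (INR_den_ge1 w Hw). unfold approx_radius.
    apply Rinv_le_contravar; [apply pow_lt; lra|]. nra.
Qed.

Fixpoint partial_sum (f : nat -> R) (n : nat) : R :=
  match n with O => 0 | S n' => partial_sum f n' + f n' end.

Lemma sum_f_R0_partial_sum f n : sum_f_R0 f n = partial_sum f (S n).
Proof. induction n as [|n IH]; simpl in *; [ring|rewrite IH; ring]. Qed.

Lemma partial_sum_le f g n : (forall i, f i <= g i) -> partial_sum f n <= partial_sum g n.
Proof. intros Hfg. induction n as [|n IH]; simpl; [lra|]. pose proof (Hfg n). lra. Qed.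

Lemma partial_sum_scal f c n : partial_sum (fun i => c * f i) n = c * partial_sum f n.
Proof. induction n as [|n IH]; simpl; [ring|rewrite IH; ring]. Qed.

Lemma partial_sum_add f K m :
  partial_sum f (K + m) = partial_sum f K + partial_sum (fun i => f (K + i)%nat) m.
Proof.
  induction m as [|m IH]; simpl; [rewrite Nat.add_0_r; ring|].
  rewrite Nat.add_succ_r. simpl. rewrite IH. ring.
Qed.

Lemma partial_sum_le_series f l n : (forall i, 0 <= f i) -> infinite_sum f l ->
  partial_sum f n <= l.
Proof.
  intros Hf Hs.
  assert (G : Un_growing (sum_f_R0 f)) by (intros k; simpl; pose proof (Hf (S k)); lra).
  destruct n as [|n].
  - pose proof (growing_ineq _ _ G Hs 0%nat). simpl in *. pose proof (Hf 0%nat). lra.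
  - rewrite <- sum_f_R0_partial_sum. apply (growing_ineq _ _ G Hs).
Qed.

Lemma series_tail_le f l K m : (forall i, 0 <= f i) -> infinite_sum f l ->
  partial_sum (fun i => f (K + i)%nat) m <= l - partial_sum f K.
Proof.
  intros Hf Hs. pose proof (partial_sum_add f K m).
  pose proof (partial_sum_le_series f l (K + m) Hf Hs). lra.
Qed.

Lemma series_tail_small f l e : infinite_sum f l -> 0 < e ->
  exists K0, forall K, (K0 <= K)%nat -> Rabs (l - partial_sum f K) < e.
Proof.
  intros Hs He. destruct (Hs e He) as [K0 HK0]. exists (S K0). intros K HK.
  destruct K as [|K]; [lia|]. rewrite <- sum_f_R0_partial_sum, Rabs_minus_sym.
  apply HK0. lia.
Qed.

Lemma Un_cv_le u L B : Un_cv u L -> (forall n, u n <= B) -> L <= B.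
Proof.
  intros Hc Hb. destruct (Rle_or_lt L B) as [|H]; [assumption|].
  destruct (Hc (L - B)) as [n Hn]; [lra|].
  specialize (Hn n (le_n _)). unfold Rdist in Hn. apply Rabs_def2 in Hn. specialize (Hb n). lra.
Qed.

Lemma series_of_bounded_partial_sums f B : (forall i, 0 <= f i) ->
  (forall n, partial_sum f n <= B) -> exists L, infinite_sum f L /\ L <= B.
Proof.
  intros Hf Hb.
  assert (Hgr : Un_growing (sum_f_R0 f)) by (intros k; simpl; pose proof (Hf (S k)); lra).
  assert (Hub : has_ub (sum_f_R0 f))
    by (exists B; intros x [i ->]; rewrite sum_f_R0_partial_sum; apply Hb).
  destruct (growing_cv _ Hgr Hub) as [L HL]. exists L. split; [exact HL|].
  apply (Un_cv_le _ L B HL). intros n. rewrite sum_f_R0_partial_sum. apply Hb.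
Qed.

Fixpoint pair_enum (Q n : nat) : nat * nat :=
  match n with
  | O => (0%nat, 0%nat)
  | S n' => let (i, p) := pair_enum Q n' in
            if Nat.ltb p (Q + i) then (i, S p) else (S i, 0%nat)
  end.

Lemma pair_enum_bound Q n : (snd (pair_enum Q n) <= Q + fst (pair_enum Q n))%nat.
Proof.
  induction n as [|n IH]; simpl; [lia|]. destruct (pair_enum Q n) as [i p].
  destruct (Nat.ltb_spec p (Q + i)); simpl in *; lia.
Qed.

Lemma pair_enum_step Q n i p : pair_enum Q n = (i, p) ->
  pair_enum Q (S n) = if Nat.ltb p (Q + i) then (i, S p) else (S i, 0%nat).
Proof. intros E. simpl. rewrite E. reflexivity. Qed.

Lemma pair_enum_onto Q i p : (p <= Q + i)%nat -> exists n, pair_enum Q n = (i, p).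
Proof.
  assert (Hrow : forall i n, pair_enum Q n = (i, 0%nat) ->
    forall p, (p <= Q + i)%nat -> exists m, pair_enum Q m = (i, p)).
  { intros i0 n Hn p0. induction p0 as [|p0 IH]; intros Hp; [exists n; exact Hn|].
    destruct (IH ltac:(lia)) as [m Hm]. exists (S m). rewrite (pair_enum_step Q m i0 p0 Hm).
    destruct (Nat.ltb_spec p0 (Q + i0)); [reflexivity|lia]. }
  revert p. induction i as [|i IH]; intros p Hp.
  - exact (Hrow 0%nat 0%nat eq_refl p Hp).
  - destruct (IH (Q + i)%nat ltac:(lia)) as [m Hm]. apply (Hrow (S i) (S m)); [|exact Hp].
    rewrite (pair_enum_step Q m i (Q + i) Hm).
    destruct (Nat.ltb_spec (Q + i) (Q + i)); [lia|reflexivity].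
Qed.

(* Row i of the enumeration has Q + i + 1 entries. *)
Lemma partial_sum_pair_enum Q (g : nat -> R) n : (forall i, 0 <= g i) ->
  partial_sum (fun k => g (fst (pair_enum Q k))) n
    <= partial_sum (fun i => INR (Q + i + 1) * g i) (S (fst (pair_enum Q n))).
Proof.
  intros Hg.
  enough (E : partial_sum (fun k => g (fst (pair_enum Q k))) n =
    partial_sum (fun i => INR (Q + i + 1) * g i) (fst (pair_enum Q n))
    + INR (snd (pair_enum Q n)) * g (fst (pair_enum Q n))).
  { rewrite E. simpl. apply Rplus_le_compat_l, Rmult_le_compat_r; [apply Hg|].
    apply le_INR. pose proof (pair_enum_bound Q n). lia. }
  induction n as [|n IH]; [simpl; ring|].
  pose proof (pair_enum_bound Q n) as Hb. destruct (pair_enum Q n) as [i p] eqn:E.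
  simpl partial_sum at 1. rewrite IH, (pair_enum_step Q n i p E), E. simpl in Hb.
  destruct (Nat.ltb_spec p (Q + i)); cbn [fst snd partial_sum].
  - rewrite S_INR. ring.
  - replace p with (Q + i)%nat by lia. rewrite !plus_INR. simpl INR. ring.
Qed.

Definition line_ball (c r : R) : R * R -> Prop :=
  fun z => exists x, z = (x, 0) /\ Rabs (x - c) <= r.

Lemma cdist_line x y : cdist (x, 0) (y, 0) = Rabs (x - y).
Proof.
  unfold cdist. simpl. rewrite <- sqrt_Rsqr_abs. f_equal. unfold Rsqr. ring.
Qed.

Lemma is_diam_line_ball c r : 0 < r -> is_diam (line_ball c r) (2 * r).
Proof.
  intros Hr. split; [lra|split].
  - intros z z' [x [-> Hx]] [y [-> Hy]]. rewrite cdist_line.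
    replace (x - y) with ((x - c) + (c - y)) by ring.
    eapply Rle_trans; [apply Rabs_triang|]. rewrite (Rabs_minus_sym c y). lra.
  - intros d Hd Hb. specialize (Hb (c + r, 0) (c - r, 0)).
    rewrite cdist_line in Hb. replace (c + r - (c - r)) with (2 * r) in Hb by ring.
    rewrite Rabs_right in Hb by lra. apply Hb.
    + exists (c + r). split; [reflexivity|]. replace (c + r - c) with r by ring.
      rewrite Rabs_right; lra.
    + exists (c - r). split; [reflexivity|]. replace (c - r - c) with (- r) by ring.
      rewrite Rabs_Ropp, Rabs_right; lra.
Qed.

Definition approx_level (Q k : nat) : nat := (Q + fst (pair_enum Q k))%nat.

Definition approx_ball (Q k : nat) : R * R -> Prop :=
  line_ball (INR (snd (pair_enum Q k)) / INR (approx_level Q k)) (approx_radius (approx_level Q k)).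

Lemma S_set_covered Q z : (2 <= Q)%nat -> embedC S_set z -> exists k, approx_ball Q k z.
Proof.
  intros HQ [c [Hc ->]].
  destruct (S_set_approx c Q Hc HQ) as [n [p [Hn [Hp Happrox]]]].
  destruct (pair_enum_onto Q (n - Q) p ltac:(lia)) as [k Hk].
  exists k. unfold approx_ball, approx_level. rewrite Hk. simpl.
  replace (Q + (n - Q))%nat with n by lia. exists c. split; [reflexivity|exact Happrox].
Qed.

Section Covering_sum.

Variables (h : R -> R) (N : nat) (l : R).
Let u (k : nat) : R := INR (N + k) * h (approx_radius (N + k)).
Hypothesis h_nonneg : forall n, (N <= n)%nat -> 0 <= h (approx_radius n).
Hypothesis N_pos : (1 <= N)%nat.
Hypothesis u_sum : infinite_sum u l.

Lemma approx_cover_sum_le K n :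
  partial_sum (fun k => h (approx_radius (approx_level (N + K) k))) n
    <= 2 * (l - partial_sum u K).
Proof.
  set (Q := (N + K)%nat). set (m := fst (pair_enum Q n)).
  assert (Hu : forall k, 0 <= u k)
    by (intros k; apply Rmult_le_pos; [apply pos_INR|apply h_nonneg; lia]).
  apply Rle_trans with (partial_sum (fun i => INR (Q + i + 1) * h (approx_radius (Q + i))) (S m)).
  { apply (partial_sum_pair_enum Q (fun i => h (approx_radius (Q + i)))).
    intros i. apply h_nonneg. unfold Q. lia. }
  apply Rle_trans with (partial_sum (fun i => 2 * u (K + i)%nat) (S m)).
  - apply partial_sum_le. intros i. unfold u.
    replace (N + (K + i))%nat with (Q + i)%nat by (unfold Q; lia).
    rewrite <- Rmult_assoc. apply Rmult_le_compat_r; [apply h_nonneg; unfold Q; lia|].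
    rewrite !plus_INR. simpl INR. assert (1 <= INR Q) by (apply (le_INR 1); unfold Q; lia).
    pose proof (pos_INR i). lra.
  - rewrite partial_sum_scal. apply Rmult_le_compat_l; [lra|].
    apply series_tail_le; assumption.
Qed.

End Covering_sum.

Lemma Hausdorff_zero_S (h : R -> R) (r0 : R) (N : nat) (l : R) :
  (forall x, 0 <= x <= r0 -> 0 <= h x) -> (1 <= N)%nat -> approx_radius N <= r0 ->
  infinite_sum (fun k => INR (N + k) * h (approx_radius (N + k))) l ->
  Hausdorff_zero h (embedC S_set).
Proof.
  intros Hh HN HNr Hs.
  assert (Hg : forall n, (N <= n)%nat -> 0 <= h (approx_radius n)).
  { intros n Hn. apply Hh. split; [left; apply approx_radius_pos; lia|].
    apply Rle_trans with (approx_radius N); [apply approx_radius_antitone|]; assumption. }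
  intros eps Heps. exists 1. split; [lra|]. intros delta [Hd0 Hd1] eta Heta.
  destruct (series_tail_small _ l (eps / 4) Hs ltac:(lra)) as [K0 HK0].
  destruct (INR_unbounded (2 / delta)) as [K1 HK1].
  set (K := (K0 + K1 + 2)%nat). set (Q := (N + K)%nat).
  assert (Htail := HK0 K ltac:(unfold K; lia)). apply Rabs_def2 in Htail.
  set (d := fun k => 2 * approx_radius (approx_level Q k)).
  assert (Hhd : forall k, h (d k / 2) = h (approx_radius (approx_level Q k)))
    by (intros k; unfold d; f_equal; field).
  destruct (series_of_bounded_partial_sums (fun k => h (d k / 2))
    (2 * (l - partial_sum (fun k => INR (N + k) * h (approx_radius (N + k))) K)))
    as [L [HL HLB]].
  { intros k. rewrite Hhd. apply Hg. unfold approx_level, Q. lia. }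
  { intros n. eapply Rle_trans; [apply partial_sum_le; intros k; right; apply Hhd|].
    apply approx_cover_sum_le; assumption. }
  exists (approx_ball Q), d, L. split; [|split; [|split]].
  - intros k. split; [apply is_diam_line_ball, approx_radius_pos; unfold approx_level, Q; lia|].
    assert (HQ : 2 < delta * INR Q).
    { assert (INR K1 <= INR Q) by (apply le_INR; unfold Q, K; lia).
      assert (2 / delta * delta = 2) by (field; lra). nra. }
    assert (/ INR (approx_level Q k) <= / INR Q)
      by (apply Rinv_le_contravar; [apply (lt_INR 0); unfold Q; lia|];
          apply le_INR; unfold approx_level; lia).
    pose proof (approx_radius_le_inv (approx_level Q k) ltac:(unfold approx_level, Q; lia)).
    assert (0 < INR Q) by (apply (lt_INR 0); unfold Q; lia).
    assert (INR Q * / INR Q = 1) by (field; lra).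
    unfold d. nra.
  - intros z Hz. apply S_set_covered; [unfold Q, K; lia|exact Hz].
  - exact HL.
  - lra.
Qed.

Definition cyl_lo (w : list nat) : R := Rmin (cf_val w 0) (cf_val w 1).
Definition cyl_hi (w : list nat) : R := Rmax (cf_val w 0) (cf_val w 1).

Lemma cyl_interior w x : Forall (le 1) w -> cyl_lo w < x < cyl_hi w ->
  exists y, 0 < y < 1 /\ x = cf_val w y.
Proof. intros Hw Hx. apply cf_val_onto; (assumption || lra). Qed.

Lemma cyl_lo_le_hi w : cyl_lo w <= cyl_hi w.
Proof. apply Rminmax. Qed.

Lemma cyl_contains w y : Forall (le 1) w -> 0 < y < 1 -> cyl_lo w < cf_val w y < cyl_hi w.
Proof.
  intros Hw Hy. unfold cyl_lo, cyl_hi.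
  destruct (cf_val_strict_mono w Hw) as [M|M];
    pose proof (M 0 y ltac:(lra) ltac:(lra)); pose proof (M y 1 ltac:(lra) ltac:(lra)).
  - rewrite Rmin_left, Rmax_right by lra. lra.
  - rewrite Rmin_right, Rmax_left by lra. lra.
Qed.

Lemma open_interval a b : open_set (fun x => a < x < b).
Proof.
  intros x Hx. assert (Hd : 0 < Rmin (x - a) (b - x)) by (apply Rmin_pos; lra).
  exists (mkposreal _ Hd). intros y Hy. unfold disc in Hy. simpl in Hy.
  apply Rabs_def2 in Hy.
  pose proof (Rmin_l (x - a) (b - x)). pose proof (Rmin_r (x - a) (b - x)). lra.
Qed.

(* The cylinder of [a :: w] witnesses a large jump q_(s+1) from q_s = den w, s = length w. *)
Definition fast_word (n a : nat) (w : list nat) : Prop :=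
  (n + 1 <= length w)%nat /\ Forall (le 1) (a :: w) /\
  ln (INR (den (a :: w))) > INR n * INR (den w) ^ 2 * ln (INR (den w)).

Definition fast_set (n : nat) (x : R) : Prop :=
  exists a w, fast_word n a w /\ cyl_lo (a :: w) < x < cyl_hi (a :: w).

Definition G_set (x : R) : Prop := forall n, fast_set n x.

Lemma fast_set_open n : open_set (fast_set n).
Proof.
  intros x [a [w [Hf Hx]]]. destruct (open_interval _ _ x Hx) as [d Hd].
  exists d. intros y Hy. exists a, w. split; [exact Hf|exact (Hd y Hy)].
Qed.

Lemma fast_set_cf_val n x : fast_set n x ->
  exists a w y, fast_word n a w /\ 0 < y < 1 /\ x = cf_val (a :: w) y.
Proof.
  intros [a [w [Hf Hx]]].
  destruct (cyl_interior (a :: w) x (proj1 (proj2 Hf)) Hx) as [y [Hy ->]].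
  exists a, w, y. auto.
Qed.

Lemma G_set_irrational x : G_set x -> irrational x.
Proof.
  intros HG [P [Q [HQ E]]].
  destruct (fast_set_cf_val (Z.abs_nat Q) x (HG _)) as [a [w [y [[Hlen [Hw _]] [Hy Ex]]]]].
  pose proof (rational_in_cylinder (a :: w) y P Q Hw Hy HQ (eq_trans (eq_sym Ex) E)) as Hb.
  rewrite Rabs_Zabs, <- Zabs2Nat.id_abs, <- INR_IZR_INZ in Hb. apply INR_lt in Hb.
  pose proof (length_le_den _ Hw). simpl length in *. lia.
Qed.

Lemma G_set_limsup x : G_set x -> forall M s0, exists s, (s0 <= s)%nat /\
  ln (cf_q x (S s)) / (cf_q x s ^ 2 * ln (cf_q x s)) > M.
Proof.
  intros HG M s0. destruct (INR_unbounded M) as [n0 Hn0].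
  set (n := S (Nat.max n0 s0)).
  destruct (fast_set_cf_val n x (HG n)) as [a [w [y [[Hlen [Hw Hln]] [Hy ->]]]]].
  exists (length w). split; [unfold n in Hlen; lia|].
  inversion Hw as [|? ? Ha Hw']. subst.
  destruct (cf_expansion_cf_val _ y Hw Hy) as [_ E1].
  destruct (cf_expansion_cf_val _ _ Hw' (Rinv_digit_lt1 a y Ha ltac:(lra))) as [_ E0].
  unfold cf_q. simpl length in E1. rewrite E1. simpl cf_val. rewrite E0. cbn [snd].
  assert (Hq : 2 <= INR (den w)).
  { apply (le_INR 2). pose proof (length_le_den w Hw'). unfold n in Hlen. lia. }
  assert (Hlnq : 0 < ln (INR (den w))) by (rewrite <- ln_1; apply ln_increasing; lra).
  assert (HD : 0 < INR (den w) ^ 2 * ln (INR (den w))) by (apply Rmult_lt_0_compat; nra).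
  assert (INR n0 <= INR n) by (apply le_INR; unfold n; lia).
  apply Rlt_gt, (Rmult_lt_reg_r (INR (den w) ^ 2 * ln (INR (den w)))); [exact HD|].
  unfold Rdiv. rewrite Rmult_assoc, Rinv_l, Rmult_1_r by lra.
  assert (M * (INR (den w) ^ 2 * ln (INR (den w))) < INR n * (INR (den w) ^ 2 * ln (INR (den w))))
    by (apply Rmult_lt_compat_r; lra).
  lra.
Qed.

Lemma G_set_S x : G_set x -> S_set x.
Proof.
  intros HG. split; [|split; [apply G_set_irrational, HG|apply G_set_limsup, HG]].
  destruct (fast_set_cf_val 0 x (HG 0%nat)) as [a [w [y [[_ [Hw _]] [Hy ->]]]]].
  apply cf_val_in_01; assumption.
Qed.

(* A digit this large forces the jump required by [fast_word] at every level n <= length w - 1. *)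
Definition threshold (w : list nat) : nat :=
  S (S (Z.to_nat (up (exp (INR (length w) * INR (den w) ^ 2 * ln (INR (den w))))))).

Lemma threshold_ge2 w : (2 <= threshold w)%nat.
Proof. unfold threshold. lia. Qed.

Lemma fast_word_threshold n e w : Forall (le 1) w -> (threshold w <= e)%nat ->
  (n + 1 <= length w)%nat -> fast_word n e w.
Proof.
  intros Hw He Hn. pose proof (threshold_ge2 w).
  split; [exact Hn|split; [constructor; [lia|exact Hw]|]].
  set (q := INR (den w)). set (X := INR (length w) * q ^ 2 * ln q).
  assert (Hq : 1 <= q) by apply (INR_den_ge1 w Hw).
  assert (HX : exp X < INR e).
  { destruct (archimed (exp X)) as [H1 _]. pose proof (exp_pos X).
    assert (0 < up (exp X))%Z by (apply lt_IZR; lra).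
    apply Rlt_le_trans with (IZR (up (exp X))); [exact H1|].
    apply Rle_trans with (INR (threshold w)); [|apply le_INR, He].
    unfold threshold. fold q X. rewrite !S_INR, INR_IZR_INZ, Z2Nat.id by lia.
    pose proof (pos_INR 0). lra. }
  assert (Hden : INR e <= INR (den (e :: w))).
  { apply le_INR. rewrite den_cons. pose proof (den_pos w Hw). nia. }
  assert (Hl : X < ln (INR (den (e :: w)))).
  { rewrite <- (ln_exp X) at 1. apply ln_increasing; [apply exp_pos|lra]. }
  assert (INR n <= INR (length w)) by (apply le_INR; lia).
  assert (0 <= q ^ 2 * ln q).
  { apply Rmult_le_pos; [nra|]. rewrite <- ln_1.
    destruct Hq as [Hq| <-]; [left; apply ln_increasing|]; lra. }
  fold q. unfold X in Hl. nra.
Qed.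

Lemma cyl_cons_nested w e : Forall (le 1) w -> (2 <= e)%nat ->
  cyl_lo w < cyl_lo (e :: w) /\ cyl_hi (e :: w) < cyl_hi w.
Proof.
  intros Hw He. pose proof (cyl_contains w _ Hw (Rinv_digit_lt1 e 1 ltac:(lia) ltac:(lra))).
  assert (2 <= INR e) by (apply (le_INR 2); exact He).
  assert (0 < / (INR e + 0) < 1).
  { rewrite Rplus_0_r. split; [apply Rinv_0_lt_compat; lra|].
    rewrite <- Rinv_1. apply Rinv_lt_contravar; lra. }
  pose proof (cyl_contains w _ Hw H1).
  unfold cyl_lo at 2. unfold cyl_hi at 1. simpl cf_val. split.
  - apply Rmin_glb_lt; lra.
  - apply Rmax_lub_lt; lra.
Qed.

Section Tower.

Variables (w0 : list nat) (choice : nat -> list nat -> nat).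
Hypothesis w0_admissible : Forall (le 1) w0.
Hypothesis choice_large : forall j w, (threshold w <= choice j w)%nat.

Fixpoint tower (j : nat) : list nat :=
  match j with O => w0 | S j' => choice j' (tower j') :: tower j' end.

Lemma tower_admissible j : Forall (le 1) (tower j).
Proof.
  induction j as [|j IH]; [exact w0_admissible|].
  apply (Forall_cons (choice j (tower j))); [|exact IH].
  pose proof (threshold_ge2 (tower j)). pose proof (choice_large j (tower j)). lia.
Qed.

Lemma tower_length j : length (tower j) = (length w0 + j)%nat.
Proof. induction j as [|j IH]; simpl; [lia|]. rewrite IH. lia. Qed.

Lemma tower_nested j :
  cyl_lo (tower j) < cyl_lo (tower (S j)) /\ cyl_hi (tower (S j)) < cyl_hi (tower j).
Proof.
  apply (cyl_cons_nested (tower j) (choice j (tower j))); [apply tower_admissible|].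
  pose proof (threshold_ge2 (tower j)). pose proof (choice_large j (tower j)). lia.
Qed.

Lemma tower_lo_hi j k : cyl_lo (tower j) < cyl_hi (tower k).
Proof.
  assert (Hlo : forall j j', (j <= j')%nat -> cyl_lo (tower j) <= cyl_lo (tower j')).
  { intros j0 j' Hjj. induction Hjj as [|j' _ IH]; [lra|]. pose proof (tower_nested j'). lra. }
  assert (Hhi : forall j j', (j <= j')%nat -> cyl_hi (tower j') <= cyl_hi (tower j)).
  { intros j0 j' Hjj. induction Hjj as [|j' _ IH]; [lra|]. pose proof (tower_nested j'). lra. }
  pose proof (Hlo j (Nat.max j k) ltac:(lia)). pose proof (Hhi k (Nat.max j k) ltac:(lia)).
  pose proof (tower_nested (Nat.max j k)). pose proof (cyl_lo_le_hi (tower (S (Nat.max j k)))). lra.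
Qed.

Lemma tower_limit : exists c, G_set c /\ forall j, cyl_lo (tower j) < c < cyl_hi (tower j).
Proof.
  set (u := fun j => cyl_lo (tower j)).
  assert (Hgr : Un_growing u) by (intros j; unfold u; pose proof (tower_nested j); lra).
  assert (Hub : has_ub u) by (exists (cyl_hi (tower 0)); intros x [i ->]; left; apply tower_lo_hi).
  destruct (growing_cv u Hgr Hub) as [c Hc].
  assert (Hin : forall j, cyl_lo (tower j) < c < cyl_hi (tower j)).
  { intros j. split.
    - apply Rlt_le_trans with (u (S j)); [apply tower_nested|apply (growing_ineq u c Hgr Hc)].
    - apply Rle_lt_trans with (cyl_hi (tower (S j))); [|apply tower_nested].
      apply (Un_cv_le u c _ Hc). intros k. left. apply tower_lo_hi. }
  exists c. split; [|exact Hin].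
  intros n. exists (choice (S n) (tower (S n))), (tower (S n)). split; [|apply (Hin (S (S n)))].
  apply fast_word_threshold; [apply tower_admissible|apply choice_large|].
  rewrite tower_length. lia.
Qed.

End Tower.

Lemma cf_rem_first_zero c K : (forall j, (j < K)%nat -> cf_rem c j <> 0) \/
  exists k, (k < K)%nat /\ cf_rem c k = 0 /\ forall j, (j < k)%nat -> cf_rem c j <> 0.
Proof.
  induction K as [|K [H|[k [Hk Hmin]]]];
    [left; intros; lia| |right; exists k; split; [lia|exact Hmin]].
  destruct (Req_dec (cf_rem c K) 0) as [E|E]; [right; exists K; auto|left].
  intros j Hj. destruct (Nat.eq_dec j K) as [->|]; [exact E|apply H; lia].
Qed.

(* If the expansion of c stops at step k, then c = cf_val w 0 and the cylinder of K :: w is used. *)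
Lemma cylinder_near c K : 0 < c < 1 -> (1 <= K)%nat ->
  exists w, Forall (le 1) w /\ forall t, 0 <= t <= 1 -> Rabs (cf_val w t - c) <= / INR K.
Proof.
  intros Hc HK. assert (HK' : 1 <= INR K) by (apply (le_INR 1); exact HK).
  destruct (cf_rem_first_zero c K) as [Hnz|[k [Hk [Hz Hnz]]]].
  - destruct (cf_digits_spec c K Hc Hnz) as [Hw [Hlen Hval]].
    exists (cf_digits c K). split; [exact Hw|]. intros t Ht.
    pose proof (cf_rem_range c K Hc). rewrite Hval at 2.
    eapply Rle_trans; [apply cf_val_lipschitz; (assumption || lra)|].
    assert (INR K <= INR (den (cf_digits c K)))
      by (apply le_INR; rewrite <- Hlen at 1; apply length_le_den, Hw).
    assert (Rabs (t - cf_rem c K) <= 1) by (apply Rabs_le; lra).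
    apply Rle_trans with (1 / INR (den (cf_digits c K))).
    + apply Rmult_le_compat_r; [left; apply Rinv_0_lt_compat; lra|assumption].
    + unfold Rdiv. rewrite Rmult_1_l. apply Rinv_le_contravar; lra.
  - destruct (cf_digits_spec c k Hc Hnz) as [Hw [_ Hval]]. rewrite Hz in Hval.
    exists (K :: cf_digits c k). split; [constructor; assumption|]. intros t Ht.
    simpl cf_val. rewrite Hval at 2.
    assert (Hy : 0 < / (INR K + t)) by (apply Rinv_0_lt_compat; lra).
    eapply Rle_trans; [apply cf_val_lipschitz; (assumption || lra)|].
    pose proof (INR_den_ge1 _ Hw).
    rewrite Rminus_0_r, Rabs_right by lra.
    apply Rle_trans with (/ (INR K + t)).
    + unfold Rdiv. rewrite <- (Rmult_1_r (/ (INR K + t))) at 2.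
      apply Rmult_le_compat_l; [lra|]. rewrite <- Rinv_1. apply Rinv_le_contravar; lra.
    + apply Rinv_le_contravar; lra.
Qed.

Lemma G_set_dense : dense_in_01 G_set.
Proof.
  intros a b Ha Hab Hb. set (c := (a + b) / 2).
  destruct (INR_unbounded (2 / (b - a))) as [K HK].
  assert (HK' : 2 / (b - a) < INR (S K)) by (rewrite S_INR; lra).
  assert (Hr : / INR (S K) < (b - a) / 2).
  { assert (0 < 2 / (b - a)) by (apply Rdiv_lt_0_compat; lra).
    replace ((b - a) / 2) with (/ (2 / (b - a))) by (field; lra).
    apply Rinv_lt_contravar; nra. }
  destruct (cylinder_near c (S K) ltac:(unfold c; lra) ltac:(lia)) as [w0 [Hw0 Hnear]].
  destruct (tower_limit w0 (fun _ w => threshold w) Hw0 (fun _ _ => le_n _)) as [x [HG Hin]].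
  exists x. split; [|exact HG]. specialize (Hin 0%nat). simpl in Hin. unfold cyl_lo, cyl_hi in Hin.
  assert (Hend : forall t, 0 <= t <= 1 -> a < cf_val w0 t < b).
  { intros t Ht. pose proof (Rle_lt_trans _ _ _ (Hnear t Ht) Hr) as Hd.
    apply Rabs_def2 in Hd. unfold c in Hd. lra. }
  pose proof (Hend 0 ltac:(lra)). pose proof (Hend 1 ltac:(lra)).
  assert (a < Rmin (cf_val w0 0) (cf_val w0 1)) by (apply Rmin_glb_lt; lra).
  assert (Rmax (cf_val w0 0) (cf_val w0 1) < b) by (apply Rmax_lub_lt; lra).
  lra.
Qed.

Lemma cf_val_images_disjoint w t1 t2 t3 t4 x : Forall (le 1) w ->
  0 < t4 -> t4 < t3 -> t3 < t2 -> t2 < t1 ->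
  Rmin (cf_val w t1) (cf_val w t2) <= x <= Rmax (cf_val w t1) (cf_val w t2) ->
  ~ (Rmin (cf_val w t3) (cf_val w t4) <= x <= Rmax (cf_val w t3) (cf_val w t4)).
Proof.
  intros Hw H4 H43 H32 H21 X1 X2.
  destruct (cf_val_strict_mono w Hw) as [M|M];
    pose proof (M t2 t1 ltac:(lra) H21); pose proof (M t3 t2 ltac:(lra) H32);
    pose proof (M t4 t3 ltac:(lra) H43).
  - rewrite Rmin_right, Rmax_left in X1, X2 by lra. lra.
  - rewrite Rmin_left, Rmax_right in X1, X2 by lra. lra.
Qed.

Lemma cyl_cons_disjoint w d x : Forall (le 1) w -> (1 <= d)%nat ->
  cyl_lo (d :: w) <= x <= cyl_hi (d :: w) ->
  ~ (cyl_lo ((d + 2)%nat :: w) <= x <= cyl_hi ((d + 2)%nat :: w)).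
Proof.
  intros Hw Hd. assert (1 <= INR d) by (apply (le_INR 1); exact Hd).
  unfold cyl_lo, cyl_hi. simpl cf_val. rewrite plus_INR. simpl INR. rewrite !Rplus_0_r.
  apply cf_val_images_disjoint; [exact Hw|apply Rinv_0_lt_compat; lra|..];
    apply Rinv_lt_contravar; nra.
Qed.

Definition in_closed_cyl (w : list nat) (x : R) : bool :=
  if Rle_dec (cyl_lo w) x then if Rle_dec x (cyl_hi w) then true else false else false.

Lemma in_closed_cyl_spec w x : in_closed_cyl w x = true <-> cyl_lo w <= x <= cyl_hi w.
Proof.
  unfold in_closed_cyl.
  destruct (Rle_dec (cyl_lo w) x), (Rle_dec x (cyl_hi w));
    split; intros H; (lra || discriminate || reflexivity).
Qed.

(* Cantor's diagonal argument: the j-th digit of the tower is chosen so that the next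
   cylinder misses f j. *)
Definition avoiding_digit (f : nat -> R) (j : nat) (w : list nat) : nat :=
  if in_closed_cyl (threshold w :: w) (f j) then (threshold w + 2)%nat else threshold w.

Lemma S_set_uncountable : ~ countable_set S_set.
Proof.
  intros [f Hf].
  assert (Hlarge : forall j w, (threshold w <= avoiding_digit f j w)%nat)
    by (intros j w; unfold avoiding_digit; destruct in_closed_cyl; lia).
  destruct (tower_limit nil (avoiding_digit f) (Forall_nil _) Hlarge) as [x [HG Hin]].
  destruct (Hf x (G_set_S x HG)) as [j Hj].
  specialize (Hin (S j)). simpl tower in Hin.
  set (w := tower nil (avoiding_digit f) j) in Hin.
  pose proof (tower_admissible nil (avoiding_digit f) (Forall_nil _) Hlarge j) as Hw. fold w in Hw.
  unfold avoiding_digit in Hin. rewrite Hj in Hin.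
  destruct (in_closed_cyl (threshold w :: w) x) eqn:E.
  - apply in_closed_cyl_spec in E.
    apply (cyl_cons_disjoint w (threshold w) x Hw ltac:(pose proof (threshold_ge2 w); lia) E). lra.
  - enough (in_closed_cyl (threshold w :: w) x = true) by congruence.
    apply in_closed_cyl_spec. lra.
Qed.

Theorem proposition1 (h : R -> R) (r0 : R) :
  0 < r0 ->
  (forall x y, 0 <= x <= r0 -> 0 <= y <= r0 -> x < y -> h x < h y) ->
  (forall x, 0 <= x <= r0 -> forall eps, 0 < eps -> exists del, 0 < del /\
     forall y, 0 <= y <= r0 -> Rabs (y - x) < del -> Rabs (h y - h x) < eps) ->
  (forall x, 0 <= x <= r0 -> 0 <= h x) ->
  h 0 = 0 ->
  (exists (N : nat) (l : R), (1 <= N)%nat /\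
     / (INR N ^ (N * N)) <= r0 /\
     infinite_sum
       (fun k => INR (N + k) * h (/ (INR (N + k) ^ ((N + k) * (N + k))))) l) ->
  Hausdorff_zero h (embedC S_set) /\
  (exists G : R -> Prop,
     (forall x, G x -> S_set x) /\ (forall x, G x -> 0 < x < 1) /\
     is_G_delta G /\ dense_in_01 G) /\
  ~ countable_set S_set.
Proof.
  intros _ _ _ Hh _ [N [l [HN [HNr Hsum]]]].
  split; [exact (Hausdorff_zero_S h r0 N l Hh HN HNr Hsum)|].
  split; [|exact S_set_uncountable].
  exists G_set. split; [exact G_set_S|]. split; [intros x Hx; apply (G_set_S x Hx)|].
  split; [|exact G_set_dense].
  exists fast_set. split; [exact fast_set_open|reflexivity].
Qed.
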